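(* Let $p$ be a prime and $m,k$ positive integers with $k\mid p^m-1$, and set $u=\frac{p^m-1}{k}$. Assume $u$ is a primitive divisor of $p^m-1$ and $u=b(p^{a}-1)$ with integers $a\ge1$, $b>1$, $m=ab$. Let $\omega$ be a primitive element of $\mathbb{F}_{p^m}$ and, for $x\in\mathbb{F}_{p^m}$, write $x=\sum_{i=0}^{b-1}c_i\omega^{ik}$ with $c_i\in\mathbb{F}_{p^a}$ and $[x]=(c_0,\ldots,c_{b-1})\in\mathbb{F}_{p^a}^b$, with $[x]_i:=c_{i-1}$ for $i=1,\ldots,b$. Then for all $x,y\in\mathbb{F}_{p^m}$ and every integer $r\ge0$, $$w_{\Gamma(k,p^m)}(r,x,y)=w_{H(b,p^{a})}(r,[x],[y])=\sum_{\substack{r_1+\cdots+r_b=r\\ r_i\ge0}} \frac{r!}{r_{1}!\cdots r_{b}!}\prod_{i=1}^b a_{i}(x,y),$$ where $$a_{i}(x,y)=\begin{cases}\frac{p^{a}-1}{p^{a}}\big((p^{a}-1)^{r_i-1}-(-1)^{r_i-1}\big) & \text{if } [x]_i=[y]_i,\\[1mm] \frac{1}{p^{a}}\big((p^{a}-1)^{r_i}-(-1)^{r_i}\big) & \text{if } [x]_i\neq[y]_i.\end{cases}$$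
   Context: For $k\mid p^m-1$, the generalized Paley graph $\Gamma(k,p^m)$ has vertex set $\mathbb{F}_{p^m}$, with $x,y$ adjacent iff $y-x\in R_k=\{z^k:z\in\mathbb{F}_{p^m}^*\}$. A divisor $u$ of $p^m-1$ is primitive if $u\nmid p^h-1$ for all $1\le h<m$. Under the hypotheses, $\{1,\omega^k,\omega^{2k},\ldots,\omega^{(b-1)k}\}$ is a basis of $\mathbb{F}_{p^m}$ over $\mathbb{F}_{p^a}$. The Hamming graph $H(b,q)$ has as vertices the $b$-tuples over a set of size $q$ (here $\mathbb{F}_{p^a}$), two tuples adjacent iff they differ in exactly one entry. $w_G(r,v,w)$ is the number of walks of length $r$ from $v$ to $w$ in $G$, with $w_G(0,v,w)=1$ if $v=w$ and $0$ otherwise. *)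

From HB Require Import structures.
From mathcomp Require Import all_boot all_order all_algebra all_field.
Set Implicit Arguments. Unset Strict Implicit. Unset Printing Implicit Defensive.
Import Order.TTheory GRing.Theory Num.Theory.
Local Open Scope ring_scope.

Fixpoint walks (V : finType) (e : rel V) (r : nat) (v w : V) : nat :=
  match r with
  | 0 => nat_of_bool (v == w)
  | r'.+1 => (\sum_(u : V | e v u) walks e r' u w)%N
  end.

Definition paley_rel (F : finFieldType) (k : nat) : rel F :=
  fun x y => [exists z : F, (z != 0) && (y - x == z ^+ k)].

Definition subF (F : finFieldType) (p a : nat) : finType :=
  {x : F | x ^+ (p ^ a) == x}.

Definition hamming_rel (Q : finType) (b : nat) : rel {ffun 'I_b -> Q} :=
  fun u v => #|[set i | u i != v i]| == 1%N.

Lemma one_in_subF (F : finFieldType) (p a : nat) : (1 : F) ^+ (p ^ a) == 1.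
Proof. by rewrite expr1n. Qed.

Definition one_subF (F : finFieldType) (p a : nat) : subF F p a :=
  exist _ 1 (one_in_subF F p a).

Definition coords (F : finFieldType) (p a b k : nat) (w : F) (x : F)
    : {ffun 'I_b -> subF F p a} :=
  odflt [ffun => one_subF F p a]
    [pick c : {ffun 'I_b -> subF F p a} |
       x == \sum_(i < b) val (c i) * w ^+ (i * k)].

Definition acoef (q ri : nat) (same : bool) : rat :=
  if same then
    ((q%:R - 1) / q%:R) * ((q%:R - 1) ^ (ri%:Z - 1) - (-1) ^ (ri%:Z - 1))
  else
    (1 / q%:R) * ((q%:R - 1) ^ (ri%:Z) - (-1) ^ (ri%:Z)).

(* Write q = p^a.  Since u = b (q - 1) is primitive, the conjugates
   (w^k)^(q^j), j < b, are distinct; a nontrivial F_q-relation among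
   1, w^k, ..., w^((b-1)k) would give a nonzero polynomial of degree < b over
   F_q vanishing at all of them, so x |-> [x] is a bijection onto F_q^b.
   As w^(kb) generates F_q^*, the nonzero k-th powers are exactly the
   e w^(ik) with e in F_q^* and i < b, so y - x is a k-th power iff [x] and
   [y] differ in exactly one coordinate: Gamma(k, p^m) is isomorphic to
   H(b, q).  Finally H(b, q) is the b-fold Cartesian power of K_q, walks in a
   Cartesian product are binomial convolutions of walks in the factors, and
   K_q has ((q-1)^r + (q-1)(-1)^r)/q closed walks and ((q-1)^r - (-1)^r)/q
   walks between two distinct vertices. *)

From HB Require Import structures.
From mathcomp Require Import all_boot all_order all_algebra all_field.
From mathcomp Require Import ring.
Import Order.TTheory GRing.Theory Num.Theory.
Set Implicit Arguments. Unset Strict Implicit. Unset Printing Implicit Defensive.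
Local Open Scope ring_scope.

Lemma walks_iso (V V' : finType) (e : rel V) (e' : rel V') (f : V -> V') :
  bijective f -> {mono f : x y / e x y >-> e' x y} ->
  forall r x y, walks e' r (f x) (f y) = walks e r x y.
Proof.
move=> f_bij f_mono r; elim: r => [|r IHr] x y /=.
  by rewrite (inj_eq (bij_inj f_bij)).
rewrite (reindex f (onW_bij _ f_bij)) /=.
by apply: eq_big => z; rewrite ?f_mono ?IHr.
Qed.

Definition cartesian_rel (V1 V2 : finType) (e1 : rel V1) (e2 : rel V2) : rel (V1 * V2) :=
  fun x y => (e1 x.1 y.1 && (x.2 == y.2)) || ((x.1 == y.1) && e2 x.2 y.2).

Definition binom_conv (A B : nat -> nat) (n : nat) : nat :=
  (\sum_(j < n.+1) 'C(n, j) * A j * B (n - j))%N.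

Lemma binom_convS A B n :
  binom_conv A B n.+1 =
  (binom_conv (fun j => A j.+1) B n + binom_conv A (fun j => B j.+1) n)%N.
Proof.
rewrite /binom_conv big_ord_recl /= bin0 subn0.
under eq_bigr => i _ do rewrite /bump leq0n add1n binS mulnDl mulnDl subSS.
rewrite big_split /=.
set S2 := (\sum_(i < n.+1) 'C(n, i.+1) * A i.+1 * B (n - i))%N.
have -> : (\sum_(j < n.+1) 'C(n, j) * A j * B (n - j).+1 = 1 * A 0 * B n.+1 + S2)%N.
  rewrite big_ord_recl /= bin0 subn0; congr (_ + _)%N.
  rewrite /S2 big_ord_recr /= bin_small // !mul0n addn0.
  by apply: eq_bigr => i _; rewrite /bump leq0n add1n subnSK.
by rewrite addnA addnC.
Qed.

Lemma binom_conv_suml (I : finType) (P : pred I) (A : I -> nat -> nat) B n :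
  (\sum_(i | P i) binom_conv (A i) B n)%N =
  binom_conv (fun j => \sum_(i | P i) A i j)%N B n.
Proof.
rewrite /binom_conv exchange_big /=; apply: eq_bigr => j _.
by rewrite big_distrr /= big_distrl.
Qed.

Lemma binom_conv_sumr (I : finType) (P : pred I) A (B : I -> nat -> nat) n :
  (\sum_(i | P i) binom_conv A (B i) n)%N =
  binom_conv A (fun j => \sum_(i | P i) B i j)%N n.
Proof.
rewrite /binom_conv exchange_big /=; apply: eq_bigr => j _.
by rewrite big_distrr.
Qed.

Lemma sum_pair_snd1 (I J : finType) (P : pred I) (j0 : J) (F : I * J -> nat) :
  (\sum_(z | P z.1 && (j0 == z.2)) F z = \sum_(i | P i) F (i, j0))%N.
Proof.
transitivity (\sum_(i | P i) \sum_(j | j == j0) F (i, j))%N.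
  by rewrite pair_big /=; apply: eq_big => [[i j]|[i j]] //=; rewrite eq_sym.
by apply: eq_bigr => i _; rewrite big_pred1_eq.
Qed.

Lemma sum_pair_fst1 (I J : finType) (i0 : I) (Q : pred J) (F : I * J -> nat) :
  (\sum_(z | (i0 == z.1) && Q z.2) F z = \sum_(j | Q j) F (i0, j))%N.
Proof.
transitivity (\sum_(i | i == i0) \sum_(j | Q j) F (i, j))%N.
  by rewrite pair_big /=; apply: eq_big => [[i j]|[i j]] //=; rewrite eq_sym.
by rewrite big_pred1_eq.
Qed.

(* A walk in the product interleaves a walk of length j in the first factor
   with one of length r - j in the second, in 'C(r, j) ways. *)
Lemma walks_cartesian (V1 V2 : finType) (e1 : rel V1) (e2 : rel V2) :
  irreflexive e1 -> forall r x1 x2 y1 y2,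
  walks (cartesian_rel e1 e2) r (x1, x2) (y1, y2) =
  binom_conv (fun j => walks e1 j x1 y1) (fun j => walks e2 j x2 y2) r.
Proof.
move=> e1_irr r; elim: r => [|r IHr] x1 x2 y1 y2.
  by rewrite /= /binom_conv big_ord_recl big_ord0 xpair_eqE /= addn0 mul1n mulnb.
rewrite binom_convS /= big_mkcond /=.
set W := walks (cartesian_rel e1 e2) r.
rewrite (eq_bigr (fun z => (if e1 x1 z.1 && (x2 == z.2) then W z (y1, y2) else 0)
   + (if (x1 == z.1) && e2 x2 z.2 then W z (y1, y2) else 0))%N); last first.
  move=> [z1 z2] _; rewrite /cartesian_rel /=.
  case: (eqVneq x1 z1) => [<-|_]; first by rewrite e1_irr.
  by rewrite orbF addn0.
rewrite big_split /= -!big_mkcond /= sum_pair_snd1 sum_pair_fst1 /W.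
under eq_bigr => i _ do rewrite IHr.
under [X in (_ + X)%N]eq_bigr => i _ do rewrite IHr.
by rewrite binom_conv_suml binom_conv_sumr.
Qed.

Definition complete_rel (Q : finType) : rel Q := fun x y => x != y.

Definition complete_walks (q n : nat) (same : bool) : rat :=
  if same then ((q%:R - 1) ^+ n + (q%:R - 1) * (-1) ^+ n) / q%:R
  else ((q%:R - 1) ^+ n - (-1) ^+ n) / q%:R.

Lemma walks_complete (Q : finType) (y : Q) n : (0 < #|Q|)%N ->
  forall x, (walks (@complete_rel Q) n x y)%:R = complete_walks #|Q| n (x == y).
Proof.
move=> Q_gt0; set q := #|Q|.
have q_neq0 : q%:R != 0 :> rat by rewrite pnatr_eq0 -lt0n.
elim: n => [|n IHn] x.
  by rewrite /= /complete_walks; case: (x == y) => /=; [field | rewrite subrr mul0r].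
rewrite /= natr_sum; under eq_bigr => z _ do rewrite IHn.
set G := fun z => complete_walks q n (z == y).
have sumG : \sum_z G z = complete_walks q n true + complete_walks q n false *+ (q - 1).
  rewrite (bigD1 y) //= /G eqxx; congr (_ + _).
  rewrite (eq_bigr (fun _ => complete_walks q n false)); last by move=> z /negbTE ->.
  by rewrite sumr_const (eq_card (B := predC1 y)) // cardC1 subn1.
have -> : \sum_(z | complete_rel x z) G z = \sum_z G z - G x.
  rewrite [in RHS](bigD1 x) //= addrC addrK; apply: eq_bigl => z.
  by rewrite /complete_rel eq_sym.
rewrite sumG /G -mulr_natr natrB // /complete_walks.
by case: (x == y); rewrite !exprS; field.
Qed.

(* [acoef] uses the integer exponent n - 1, which is -1 for n = 0. *)
Lemma acoefE q n same : (1 < q)%N -> acoef q n same = complete_walks q n same.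
Proof.
move=> q_gt1.
have q_neq0 : q%:R != 0 :> rat by rewrite pnatr_eq0; case: q q_gt1.
have q1_neq0 : q%:R - 1 != 0 :> rat.
  by rewrite subr_eq0 pnatr_eq1; case: q q_gt1 {q_neq0} => [|[|]].
rewrite /acoef /complete_walks; case: same; last by rewrite mulrC div1r.
case: n => [|n].
  rewrite (_ : (0%:Z - 1 = -1)%R) // !expr0 !exprN1 invrN1.
  by field; rewrite q_neq0 q1_neq0.
rewrite (_ : (n.+1%:Z - 1 = n%:Z)%R); last by rewrite -addn1 PoszD addrK.
by rewrite -!exprnP !exprSr; field.
Qed.

Definition splitf (Q : Type) b (c : {ffun 'I_b.+1 -> Q}) : Q * {ffun 'I_b -> Q} :=
  (c ord0, [ffun i => c (lift ord0 i)]).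

Definition joinf (Q : Type) b (z : Q * {ffun 'I_b -> Q}) : {ffun 'I_b.+1 -> Q} :=
  [ffun i => if unlift ord0 i is Some j then z.2 j else z.1].

Lemma splitfK (Q : Type) b : cancel (@splitf Q b) (@joinf Q b).
Proof.
move=> c; apply/ffunP => i; rewrite ffunE.
by case: unliftP => [j ->|->]; rewrite ?ffunE.
Qed.

Lemma joinfK (Q : Type) b : cancel (@joinf Q b) (@splitf Q b).
Proof.
case=> x c; rewrite /splitf ffunE unlift_none; congr pair.
by apply/ffunP => j; rewrite !ffunE liftK.
Qed.

Lemma hamming_relP (Q : finType) b (c d : {ffun 'I_b -> Q}) :
  reflect (exists i0, c i0 != d i0 /\ forall i, i != i0 -> c i = d i)
          (hamming_rel c d).
Proof.
apply: (iffP cards1P) => [[i0 D1]|[i0 [ne_i0 eq_other]]].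
  exists i0; split; first by have := set11 i0; rewrite -D1 inE.
  by move=> i ne_i; apply/eqP; have := ne_i; rewrite -in_set1 -D1 inE negbK.
exists i0; apply/setP => i; rewrite !inE.
by case: (eqVneq i i0) => [->|/eq_other ->]; rewrite ?eqxx.
Qed.

Lemma hamming_relS (Q : finType) b (c d : {ffun 'I_b.+1 -> Q}) :
  hamming_rel c d = cartesian_rel (@complete_rel Q) (@hamming_rel Q b) (splitf c) (splitf d).
Proof.
rewrite /cartesian_rel /complete_rel /=.
apply/hamming_relP/idP => [[i0 [ne_i0 eq_other]]|].
  case: (unliftP ord0 i0) ne_i0 eq_other => [j0 ->|->] ne_i0 eq_other.
    rewrite eq_other // eqxx /=; apply/hamming_relP.
    exists j0; rewrite !ffunE; split=> // j ne_j.
    by rewrite !ffunE eq_other // (inj_eq (@lift_inj _ ord0)).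
  rewrite ne_i0; apply/orP; left; apply/eqP/ffunP => j; rewrite !ffunE.
  exact: eq_other.
case/orP=> [/andP[ne0 /eqP/ffunP eq_lift]|/andP[/eqP eq0 /hamming_relP[j0 [ne_j0 eq_other]]]].
  exists ord0; split=> // i; case: (unliftP ord0 i) => [j -> _|-> //].
  by have := eq_lift j; rewrite !ffunE.
exists (lift ord0 j0); move: ne_j0; rewrite !ffunE; split=> // i.
case: (unliftP ord0 i) => [j -> ne_j|-> //].
have := eq_other j; rewrite !ffunE; apply.
by apply: contraNneq ne_j => ->.
Qed.

(* Each part ranges over 'I_N.+1 for some bound N >= r, so that the recursion
   on b can lower r while keeping the index type. *)
Definition multinomial_sum (b N r : nat) (f : 'I_b -> nat -> rat) : rat :=
  \sum_(rr : {ffun 'I_b -> 'I_N.+1} | (\sum_(i < b) (rr i : nat))%N == r)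
    ((r`!)%:R / (\prod_(i < b) ((rr i)`!)%:R)) * \prod_(i < b) f i (rr i).
Arguments multinomial_sum : clear implicits.

Lemma eq_multinomial_sum b N r (f g : 'I_b -> nat -> rat) :
  (forall i j, f i j = g i j) -> multinomial_sum b N r f = multinomial_sum b N r g.
Proof.
move=> fg; apply: eq_bigr => rr _; congr (_ * _).
by apply: eq_bigr => i _.
Qed.

Lemma multinomial_sum0 N r f : multinomial_sum 0 N r f = (r == 0%N)%:R.
Proof.
rewrite /multinomial_sum; case: (eqVneq r 0%N) => [->|r_neq0].
  rewrite (big_pred1 [ffun i => ord0]); last first.
    by move=> t /=; rewrite big_ord0 eqxx; apply/esym/eqP/ffunP => -[].
  by rewrite !big_ord0 fact0 divr1.
by rewrite big_pred0 //= => t; rewrite big_ord0 eq_sym; apply/negbTE.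
Qed.

Lemma big_joinf (R : Type) (idx : R) (op : R -> R -> R) (Q : Type) b
    (F : 'I_b.+1 -> Q -> R) (z : Q * {ffun 'I_b -> Q}) :
  \big[op/idx]_(i < b.+1) F i (joinf z i) =
  op (F ord0 z.1) (\big[op/idx]_(i < b) F (lift ord0 i) (z.2 i)).
Proof.
rewrite big_ord_recl ffunE unlift_none; congr (op _ _).
by apply: eq_bigr => i _; rewrite ffunE liftK.
Qed.

Lemma multinomial_sumS b N r f : (r <= N)%N ->
  multinomial_sum b.+1 N r f =
  \sum_(j < N.+1 | (j <= r)%N)
    'C(r, j)%:R * f ord0 j * multinomial_sum b N (r - j) (fun i => f (lift ord0 i)).
Proof.
move=> r_le_N; rewrite /multinomial_sum.
rewrite (reindex (@joinf _ b) (onW_bij _ (Bijective (@joinfK _ b) (@splitfK _ b)))) /=.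
under eq_bigl => z do rewrite (big_joinf 0%N addn (fun _ (j : 'I_N.+1) => val j)).
under eq_bigr => z _ do rewrite (big_joinf 1 *%R (fun _ (j : 'I_N.+1) => (j`!)%:R))
  (big_joinf 1 *%R (fun i (j : 'I_N.+1) => f i j)).
transitivity (\sum_(j : 'I_N.+1 | (j <= r)%N)
  \sum_(t : {ffun 'I_b -> 'I_N.+1} | (\sum_(i < b) (t i : nat))%N == (r - j)%N)
    (r`!)%:R / ((j`!)%:R * \prod_(i < b) ((t i)`!)%:R) *
    (f ord0 j * \prod_(i < b) f (lift ord0 i) (t i))).
  rewrite pair_big_dep; apply: eq_big => [[j t]|[j t] _] //=.
  by apply/idP/andP => [/eqP <-|[j_le_r /eqP ->]]; rewrite ?leq_addr ?addKn ?subnKC.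
apply: eq_bigr => j j_le_r; rewrite big_distrr /=; apply: eq_bigr => t _.
have fact_neq0 n : (n`!)%:R != 0 :> rat by rewrite pnatr_eq0 -lt0n fact_gt0.
have prod_neq0 : \prod_(i < b) ((t i)`!)%:R != 0 :> rat.
  by rewrite prodf_seq_neq0; apply/allP => i _; apply: fact_neq0.
rewrite -(bin_fact j_le_r) !natrM.
by field; rewrite !fact_neq0 prod_neq0.
Qed.

Lemma walks_hamming (Q : finType) b : (1 < #|Q|)%N ->
  forall N r, (r <= N)%N -> forall c d : {ffun 'I_b -> Q},
  (walks (@hamming_rel Q b) r c d)%:R =
  multinomial_sum b N r (fun i j => acoef #|Q| j (c i == d i)).
Proof.
move=> Q_gt1; elim: b => [|b IHb] N r r_le_N c d.
  rewrite multinomial_sum0; case: r r_le_N => [|r] _ /=.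
    by rewrite (_ : c = d) ?eqxx //; apply/ffunP => -[].
  rewrite big_pred0 // => u.
  by apply/negbTE/hamming_relP => -[[]].
rewrite multinomial_sumS //.
have splitf_mono : {mono @splitf Q b : x y / hamming_rel x y >->
  cartesian_rel (@complete_rel Q) (@hamming_rel Q b) x y}.
  by move=> x y; rewrite hamming_relS.
rewrite -(walks_iso (Bijective (@splitfK _ b) (@joinfK _ b)) splitf_mono).
rewrite walks_cartesian; last by move=> x; rewrite /complete_rel eqxx.
rewrite /binom_conv natr_sum (big_ord_widen N.+1 (fun j : nat =>
  ('C(r, j) * walks (@complete_rel Q) j (c ord0) (d ord0) *
   walks (@hamming_rel Q b) (r - j) [ffun i => c (lift ord0 i)] [ffun i => d (lift ord0 i)])%:R)
  (r_le_N : (r < N.+1)%N)).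
apply: eq_big => [j|j j_le_r]; first by rewrite ltnS.
rewrite !natrM (walks_complete _ _ (ltnW Q_gt1)) acoefE //; congr (_ * _).
rewrite (IHb N (r - j)%N); last exact: leq_trans (leq_subr _ _) r_le_N.
by apply: eq_multinomial_sum => i k; rewrite !ffunE.
Qed.

Section FrobeniusPower.

Variables (R : comNzRingType) (p a : nat).
Hypothesis charR : p \in [pchar R].

Lemma pchar_nat_exp : [pchar R].-nat (p ^ a)%N.
Proof. by rewrite (eq_pnat _ (pcharf_eq charR)) pnatX pnat_id // (pcharf_prime charR). Qed.

Lemma exprD_pchar_exp (x y : R) : (x + y) ^+ (p ^ a)%N = x ^+ (p ^ a)%N + y ^+ (p ^ a)%N.
Proof. exact: exprDn_pchar pchar_nat_exp. Qed.

Lemma exprB_pchar_exp (x y : R) : (x - y) ^+ (p ^ a)%N = x ^+ (p ^ a)%N - y ^+ (p ^ a)%N.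
Proof. by rewrite exprD_pchar_exp exprNn_pchar // pchar_nat_exp. Qed.

Lemma expr_sum_pchar_exp (I : finType) (f : I -> R) :
  (\sum_i f i) ^+ (p ^ a)%N = \sum_i f i ^+ (p ^ a)%N.
Proof.
apply: (big_morph (fun x : R => x ^+ (p ^ a)%N)); first exact: exprD_pchar_exp.
by rewrite expr0n eqn0Ngt expn_gt0 prime_gt0 // (pcharf_prime charR).
Qed.

End FrobeniusPower.

Lemma expf_card_pred (F : finFieldType) (x : F) : x != 0 -> x ^+ #|F|.-1 = 1.
Proof.
move=> x_neq0; apply: (mulfI x_neq0); rewrite mulr1 -exprS prednK ?expf_card //.
by apply/card_gt0P; exists x.
Qed.

Section KthPowerBasis.

Variables (F : finFieldType) (p a b k : nat) (w : F).
Hypothesis p_prime : prime p.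
Hypothesis cardF : #|F| = (p ^ (a * b))%N.
Hypothesis w_prim : (p ^ (a * b) - 1).-primitive_root w.
Hypothesis orderE : (p ^ (a * b) - 1 = k * (b * (p ^ a - 1)))%N.
Hypothesis u_primitive :
  forall h, (1 <= h < a * b)%N -> ~~ (b * (p ^ a - 1) %| p ^ h - 1)%N.

Local Notation q := (p ^ a)%N.
Local Notation n := (p ^ (a * b) - 1)%N.

Let factors_gt0 : [&& 0 < k, 0 < b & 1 < q]%N.
Proof. by have := prim_order_gt0 w_prim; rewrite orderE !muln_gt0 subn_gt0. Qed.

Let k_gt0 : (0 < k)%N. Proof. by case/and3P: factors_gt0. Qed.
Let b_gt0 : (0 < b)%N. Proof. by case/and3P: factors_gt0. Qed.
Let q_gt1 : (1 < q)%N. Proof. by case/and3P: factors_gt0. Qed.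
Let q_gt0 : (0 < q)%N. Proof. exact: ltnW q_gt1. Qed.
Let a_gt0 : (0 < a)%N. Proof. by case: a q_gt1 => [|a']; rewrite ?expn0. Qed.

Let charF : p \in [pchar F].
Proof. exact: card_finPcharP cardF p_prime. Qed.

Lemma expr_order (x : F) : x != 0 -> x ^+ n = 1.
Proof. by rewrite -cardF subn1; apply: expf_card_pred. Qed.

Lemma w_neq0 : w != 0.
Proof.
apply/eqP => w0; have := prim_expr_order w_prim.
by rewrite w0 expr0n eqn0Ngt (prim_order_gt0 w_prim) => /eqP; rewrite eq_sym oner_eq0.
Qed.

Lemma fixed_expr t : (w ^+ (k * b * t)) ^+ q = w ^+ (k * b * t).
Proof.
rewrite -exprM; apply/eqP; rewrite (eq_prim_root_expr w_prim).
rewrite eqn_mod_dvd; last by rewrite leq_pmulr.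
by rewrite -{2}[(k * b * t)%N]muln1 -mulnBr orderE; apply/dvdnP; exists t; ring.
Qed.

Lemma fixed_neq0P (x : F) : x != 0 -> x ^+ q = x ->
  exists2 t, (t < q - 1)%N & x = w ^+ (k * b * t).
Proof.
move=> x_neq0 x_fixed.
have [[i i_lt] /= x_eq] := prim_rootP w_prim (expr_order x_neq0).
rewrite x_eq -exprM in x_fixed *; move/eqP: x_fixed.
rewrite (eq_prim_root_expr w_prim) eqn_mod_dvd; last by rewrite leq_pmulr.
rewrite -{2}[i]muln1 -mulnBr orderE mulnA dvdn_pmul2r ?subn_gt0 // => kb_dvd_i.
exists (i %/ (k * b))%N; last by rewrite mulnC divnK.
by rewrite ltn_divLR ?muln_gt0 ?k_gt0 // mulnC -mulnA -orderE.
Qed.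

Lemma card_subF : #|subF F p a| = q.
Proof.
rewrite card_sig.
have -> : #|[pred x : F | x ^+ q == x]| = #|0 |: [set w ^+ (k * b * t) | t : 'I_(q - 1)]|.
  apply: eq_card => x; rewrite !inE.
  have [->|x_neq0] /= := eqVneq x 0; first by rewrite expr0n eqn0Ngt q_gt0 eqxx.
  apply/eqP/imsetP => [/(fixed_neq0P x_neq0)[t t_lt ->]|[t _ ->]].
    by exists (Ordinal t_lt).
  exact: fixed_expr.
rewrite cardsU1 card_imset; last first.
  move=> t1 t2 /eqP; rewrite (eq_prim_root_expr w_prim) !modn_small; first last.
  - by rewrite orderE mulnA ltn_pmul2l ?muln_gt0 ?k_gt0.
  - by rewrite orderE mulnA ltn_pmul2l ?muln_gt0 ?k_gt0.
  by rewrite eqn_pmul2l ?muln_gt0 ?k_gt0 // => /eqP/val_inj.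
suff -> : (0 : F) \notin [set w ^+ (k * b * t) | t : 'I_(q - 1)].
  by rewrite card_ord add1n subn1 prednK.
by apply/imsetP => -[t _ /esym/eqP]; rewrite expf_eq0 (negbTE w_neq0) andbF.
Qed.

Lemma card_subF_gt1 : (1 < #|subF F p a|)%N.
Proof. by rewrite card_subF. Qed.

Lemma kth_powerP (x : F) :
  reflect (exists i : 'I_b, exists2 e, (e != 0) && (e ^+ q == e) & x = e * w ^+ (i * k))
          [exists z, (z != 0) && (x == z ^+ k)].
Proof.
apply: (iffP existsP) => [[z /andP[z_neq0 /eqP ->]]|[i [e /andP[e_neq0 /eqP e_fixed] ->]]].
  have [[j _] /= ->] := prim_rootP w_prim (expr_order z_neq0).
  exists (Ordinal (ltn_pmod j b_gt0)), (w ^+ (k * b * (j %/ b))).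
    by rewrite expf_neq0 ?w_neq0 //= fixed_expr.
  by rewrite -!exprM -exprD /=; congr (w ^+ _); rewrite {1}(divn_eq j b); ring.
have [t _ e_eq] := fixed_neq0P e_neq0 e_fixed.
exists (w ^+ (b * t + i)); rewrite expf_neq0 ?w_neq0 //=.
by rewrite e_eq -!exprM -exprD; apply/eqP; congr (w ^+ _); ring.
Qed.

(* Equal conjugates would make u = b (q - 1) divide q ^ (j2 - j1) - 1. *)
Lemma conjugates_uniq : uniq [seq (w ^+ k) ^+ (q ^ j) | j <- iota 0 b].
Proof.
have conj_neq j1 j2 : (j1 < j2 < b)%N -> (w ^+ k) ^+ (q ^ j1) != (w ^+ k) ^+ (q ^ j2).
  case/andP=> j12 j2_lt; rewrite -!exprM (eq_prim_root_expr w_prim) eq_sym.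
  rewrite eqn_mod_dvd; last by rewrite leq_mul // leq_pexp2l // ltnW.
  rewrite -mulnBr orderE dvdn_pmul2l // -(subnKC (ltnW j12)) expnD.
  rewrite -{2}[(q ^ j1)%N]muln1 -mulnBr Gauss_dvdr; last first.
    have coprime_n_p : coprime n p.
      rewrite subn1 (coprime_dvdr _ (coprimePn _)) ?expn_gt0 ?prime_gt0 //.
      by rewrite dvdn_exp ?muln_gt0 ?a_gt0.
    apply/coprimeXr/coprimeXr/(coprime_dvdl _ coprime_n_p).
    by rewrite orderE dvdn_mull.
  rewrite -expnM; apply: u_primitive.
  by rewrite muln_gt0 a_gt0 subn_gt0 j12 ltn_pmul2l // (leq_ltn_trans (leq_subr _ _)).
rewrite map_inj_in_uniq ?iota_uniq // => j1 j2; rewrite !mem_iota !add0n.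
move=> /andP[_ j1_lt] /andP[_ j2_lt] eq12.
case: (ltngtP j1 j2) => [lt12|lt21|//].
  by have := conj_neq j1 j2; rewrite lt12 j2_lt eq12 eqxx => /(_ isT).
by have := conj_neq j2 j1; rewrite lt21 j1_lt eq12 eqxx => /(_ isT).
Qed.

Lemma basis_free (f : 'I_b -> F) : (forall i, f i ^+ q = f i) ->
  \sum_(i < b) f i * w ^+ (i * k) = 0 -> forall i, f i = 0.
Proof.
move=> f_fixed sum0 i; apply/eqP/negPn/negP => fi_neq0.
pose g := \poly_(j < b) oapp f 0 (insub j).
have g_neq0 : g != 0.
  by apply: contra fi_neq0 => /eqP/(congr1 (coefp i)); rewrite /= coef_poly ltn_ord valK coef0 /= => ->.
have g_frob y : g.[y ^+ q] = g.[y] ^+ q.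
  rewrite !horner_poly expr_sum_pchar_exp //; apply: eq_bigr => j _.
  rewrite exprMn exprAC; congr (_ * _).
  by case: insub => [j'|]; rewrite /= ?f_fixed // expr0n eqn0Ngt q_gt0.
have g_root j : root g ((w ^+ k) ^+ (q ^ j)).
  apply/eqP; elim: j => [|j IHj].
    rewrite expn0 expr1 horner_poly -[RHS]sum0; apply: eq_bigr => j _.
    by rewrite valK /= -exprM mulnC.
  by rewrite expnSr exprM g_frob IHj expr0n eqn0Ngt q_gt0.
pose rs := [seq (w ^+ k) ^+ (q ^ j) | j <- iota 0 b].
have := max_poly_roots g_neq0 (rs := rs).
have -> : all (root g) rs by apply/allP => y /mapP[j _ ->].
by rewrite conjugates_uniq size_map size_iota ltnNge size_poly => /(_ isT isT).
Qed.

Definition of_coords (c : {ffun 'I_b -> subF F p a}) : F :=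
  \sum_(i < b) val (c i) * w ^+ (i * k).

Lemma subF_fixed (x : subF F p a) : val x ^+ q = val x.
Proof. exact/eqP/(valP x). Qed.

Lemma of_coordsB c d :
  of_coords d - of_coords c = \sum_(i < b) (val (d i) - val (c i)) * w ^+ (i * k).
Proof. by rewrite -sumrB; apply: eq_bigr => i _; rewrite mulrBl. Qed.

Lemma of_coords_inj : injective of_coords.
Proof.
move=> c d cd; apply/ffunP => i; apply/val_inj/esym/eqP; rewrite -subr_eq0; apply/eqP.
apply: (basis_free (f := fun j => val (d j) - val (c j))) => [j|].
  by rewrite (exprB_pchar_exp _ charF) !subF_fixed.
by rewrite -of_coordsB cd subrr.
Qed.

Lemma of_coords_bij : bijective of_coords.
Proof.
by apply: inj_card_bij of_coords_inj _; rewrite card_ffun card_subF card_ord cardF expnM.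
Qed.

Lemma coordsK : cancel (coords p a b k w) of_coords.
Proof.
move=> x; rewrite /coords; case: pickP => [c /eqP -> //|no_coords].
have [g _ gK] := of_coords_bij.
by have := no_coords (g x); rewrite [X in x == X](_ : _ = of_coords (g x)) // gK eqxx.
Qed.

Lemma coords_bij : bijective (coords p a b k w).
Proof.
exists of_coords; first exact: coordsK.
by move=> c; apply: of_coords_inj; rewrite coordsK.
Qed.

Lemma paley_of_coords c d :
  paley_rel k (of_coords c) (of_coords d) = hamming_rel c d.
Proof.
rewrite /paley_rel of_coordsB; apply/kth_powerP/hamming_relP.
  move=> [i0 [e /andP[e_neq0 /eqP e_fixed] diff_eq]].
  pose f i := val (d i) - val (c i) - (if i == i0 then e else 0).
  have f0 : forall i, f i = 0.
    apply: basis_free => [i|].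
      by rewrite /f !(exprB_pchar_exp _ charF) !subF_fixed; case: eqP; rewrite ?e_fixed ?expr0n ?eqn0Ngt ?q_gt0.
    rewrite /f; under eq_bigr => i _ do rewrite mulrBl.
    rewrite sumrB diff_eq (bigD1 i0) //= eqxx big1 ?addr0 ?subrr // => i /negbTE ->.
    by rewrite mul0r.
  have coord_eq i : val (d i) - val (c i) = if i == i0 then e else 0.
    by apply/eqP; rewrite -subr_eq0; apply/eqP/f0.
  exists i0; split.
    by apply: contra e_neq0 => /eqP cd; have := coord_eq i0; rewrite eqxx cd subrr => <-.
  move=> i /negbTE i_neq; apply/val_inj/esym/eqP.
  by rewrite -subr_eq0 coord_eq i_neq.
move=> [i0 [cd_neq cd_eq]].
exists i0, (val (d i0) - val (c i0)).
  by rewrite (exprB_pchar_exp _ charF) !subF_fixed eqxx subr_eq0 andbT eq_sym (inj_eq val_inj).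
rewrite (bigD1 i0) //= big1 ?addr0 // => i /cd_eq ->.
by rewrite subrr mul0r.
Qed.

Lemma walks_paley_hamming r x y :
  walks (paley_rel k) r x y =
  walks (@hamming_rel (subF F p a) b) r (coords p a b k w x) (coords p a b k w y).
Proof.
symmetry; apply: walks_iso coords_bij _ r x y => u v.
by rewrite -paley_of_coords !coordsK.
Qed.

End KthPowerBasis.

Theorem proposition4p2 (p m k a b : nat) (F : finFieldType) (w : F) :
  prime p -> (0 < m)%N -> (0 < k)%N ->
  #|F| = (p ^ m)%N ->
  (k %| p ^ m - 1)%N ->
  (forall h : nat, (1 <= h < m)%N -> ~~ (((p ^ m - 1) %/ k) %| p ^ h - 1)%N) ->
  (1 <= a)%N -> (1 < b)%N -> m = (a * b)%N ->
  ((p ^ m - 1) %/ k)%N = (b * (p ^ a - 1))%N ->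
  (p ^ m - 1)%N.-primitive_root w ->
  forall (x y : F) (r : nat),
    walks (paley_rel k) r x y
      = walks (@hamming_rel (subF F p a) b) r (coords p a b k w x) (coords p a b k w y)
    /\
    (walks (paley_rel k) r x y)%:R =
      \sum_(rr : {ffun 'I_b -> 'I_r.+1} | (\sum_(i < b) (rr i : nat))%N == r)
        ((r`!)%:R / (\prod_(i < b) ((rr i)`!)%:R)) *
        \prod_(i < b) acoef (p ^ a) (rr i)
                        (coords p a b k w x i == coords p a b k w y i) :> rat.
Proof.
move=> p_prime _ _ cardF k_dvd u_primitive _ _ m_eq u_eq w_prim x y r.
subst m; rewrite u_eq in u_primitive.
have orderE : (p ^ (a * b) - 1 = k * (b * (p ^ a - 1)))%N.
  by rewrite -u_eq [RHS]mulnC divnK.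
have walks_eq := walks_paley_hamming p_prime cardF w_prim orderE u_primitive r x y.
split=> //; rewrite walks_eq (walks_hamming (card_subF_gt1 cardF w_prim orderE) (leqnn r)).
by rewrite (card_subF cardF w_prim orderE).
Qed.
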